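(* Consider the FlexPD-G iterates described in the context with integer $T\ge1$, and let $c_1=1+\alpha\rho(B)$. Choose $\eta_2>0$ and $\eta_3>\rho(B)$ with $\eta_2+\eta_3<2m-\rho(B)$. If $0<\alpha<\frac{\eta_2}{L^2}$ and $0<\beta<\frac{2m-(\eta_2+\eta_3)-\rho(B)}{\rho(A'A)}$, then there exists $\delta_G>0$ such that for all $k\ge0$, \[c_1\|x^{k+1,T}-x^*\|^2+\frac{\alpha}{\beta}\|\lambda^{k+1}-\lambda^*\|^2\le\frac{1}{1+\delta_G}\Big(\|x^{k+1,T-1}-x^*\|^2+\frac{\alpha}{\beta}\|\lambda^k-\lambda^*\|^2+\alpha\rho(B)\|x^k-x^*\|^2\Big).\]
   Context: Setting: $n$ agents are connected by a connected undirected graph with edge set $\mathcal E$, $\epsilon=|\mathcal E|$. For $x\in\mathbb R^n$ let $f(x)=\sum_{i=1}^n f_i(x_i)$, where each $f_i:\mathbb R\to\mathbb R$ is twice differentiable with $m\le f_i''\le L$ for constants $0<m\le L$; $\nabla f(x)=(f_1'(x_1),\dots,f_n'(x_n))'$. $A\in\mathbb R^{\epsilon\times n}$ is the edge–node incidence matrix (null space spanned by the all-ones vector). $B\in\mathbb R^{n\times n}$ is symmetric positive semidefinite with the same null space as $A$, off-diagonal entries nonzero only on edges, and $\rho(B)<m$. $x^*$ is the unique minimizer of $f$ subject to $Ax=0$ and $\lambda^*$ a Lagrange multiplier with $\nabla f(x^* )+A'\lambda^*=0$, $Ax^*=0$, $Bx^*=0$, chosen in the column space of $A$. FlexPD-G: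 given $\alpha,\beta>0$, $T\ge1$, $x^0$ arbitrary, $\lambda^0=0$; for $k\ge0$: $x^{k+1,0}=x^k$; for $t=1,\dots,T$, $x^{k+1,t}=x^{k+1,t-1}-\alpha\nabla f(x^{k+1,t-1})-\alpha A'\lambda^k-\alpha Bx^k$; then $x^{k+1}=x^{k+1,T}$, $\lambda^{k+1}=\lambda^k+\beta Ax^{k+1}$. Notation: $\rho(S)$ largest eigenvalue of symmetric $S$; $\|\cdot\|$ Euclidean norm. *)

From HB Require Import structures.
From mathcomp Require Import all_boot all_order all_algebra.
From mathcomp Require Import all_classical all_reals all_analysis.
Set Implicit Arguments. Unset Strict Implicit. Unset Printing Implicit Defensive.
Import Order.TTheory GRing.Theory Num.Theory.
Local Open Scope ring_scope.

Section FlexPD.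
Variable R : realType.

Definition sqnorm (p : nat) (v : 'cV[R]_p) : R := \sum_(i < p) (v i 0) ^+ 2.

Definition is_rho (p : nat) (S : 'M[R]_p) (r : R) : Prop :=
  eigenvalue S r /\ (forall a, eigenvalue S a -> a <= r).

(* Undirected graph on 'I_n given by an edge list E : 'I_eps -> 'I_n * 'I_n
   (each edge listed once, with an arbitrary orientation). *)
Definition adj (n eps : nat) (E : 'I_eps -> 'I_n * 'I_n) : rel 'I_n :=
  fun i j => [exists e, (E e == (i, j)) || (E e == (j, i))].

Definition simple_edges (n eps : nat) (E : 'I_eps -> 'I_n * 'I_n) : Prop :=
  (forall e, (E e).1 != (E e).2) /\
  (forall e e', e != e' -> (E e != E e') /\ (E e != ((E e').2, (E e').1))).

Definition graph_connected (n eps : nat) (E : 'I_eps -> 'I_n * 'I_n) : Prop :=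
  forall i j, connect (adj E) i j.

Definition incidence (n eps : nat) (E : 'I_eps -> 'I_n * 'I_n) : 'M[R]_(eps, n) :=
  \matrix_(e < eps, k < n) ((k == (E e).1)%:R - (k == (E e).2)%:R).

Definition fsum (n : nat) (f : 'I_n -> R -> R) (x : 'cV[R]_n) : R :=
  \sum_(i < n) f i (x i 0).

Definition grad (n : nat) (f : 'I_n -> R -> R) (x : 'cV[R]_n) : 'cV[R]_n :=
  \col_(i < n) derive1 (f i) (x i 0).

Definition inner_step (n eps : nat) (f : 'I_n -> R -> R) (A : 'M[R]_(eps, n))
  (B : 'M[R]_n) (alpha : R) (lam : 'cV[R]_eps) (xk : 'cV[R]_n) (y : 'cV[R]_n)
  : 'cV[R]_n :=
  y - alpha *: grad f y - alpha *: (A^T *m lam) - alpha *: (B *m xk).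

Fixpoint flexpd_state (n eps : nat) (f : 'I_n -> R -> R) (A : 'M[R]_(eps, n))
  (B : 'M[R]_n) (alpha beta : R) (T : nat) (x0 : 'cV[R]_n) (k : nat)
  : 'cV[R]_n * 'cV[R]_eps :=
  match k with
  | 0 => (x0, 0)
  | k'.+1 =>
      let: (xk, lk) := flexpd_state f A B alpha beta T x0 k' in
      let xn := iter T (inner_step f A B alpha lk xk) xk in
      (xn, lk + beta *: (A *m xn))
  end.

Definition flexpd_x n eps f A B alpha beta T x0 k : 'cV[R]_n :=
  (@flexpd_state n eps f A B alpha beta T x0 k).1.
Definition flexpd_lam n eps f A B alpha beta T x0 k : 'cV[R]_eps :=
  (@flexpd_state n eps f A B alpha beta T x0 k).2.

(* inner iterate x^{k+1,t} *)
Definition flexpd_inner n eps f A B alpha beta T x0 k t : 'cV[R]_n :=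
  iter t (inner_step f A B alpha (@flexpd_lam n eps f A B alpha beta T x0 k)
                                 (@flexpd_x n eps f A B alpha beta T x0 k))
         (@flexpd_x n eps f A B alpha beta T x0 k).

End FlexPD.

From HB Require Import structures.
From mathcomp Require Import all_boot all_order all_algebra.
From mathcomp Require Import all_classical all_reals all_analysis.
Import Order.TTheory GRing.Theory Num.Theory.
Local Open Scope ring_scope.
From mathcomp Require Import ring lra.
Set Implicit Arguments. Unset Strict Implicit. Unset Printing Implicit Defensive.

(* Write u = x^{k+1,T-1} - x*, e = x^{k+1,T} - x*, w = x^k - x*, and mu, mu' for
   the multiplier errors before and after the dual step.  By the mean value theorem
   grad f (x^{k+1,T-1}) - grad f x* = H u with H diagonal and m <= H <= L, so with the
   optimality conditions the last inner step and the dual step read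
     e = u - alpha (H u + A^T mu + B w),      mu' = mu + beta A e.
   Expanding the squares, the gap D between the right-hand side (without the factor
   1/(1 + delta)) and the left-hand side is at least
     |u - e|^2 + 2 alpha <H u, e> - alpha (2m - eta2) |e|^2 + alpha (w+e)^T B (w+e),
   because beta rho(A^T A) < 2m - eta2 - 2 rho(B); this is where eta3 > rho(B) is used.
   Coordinatewise, the first three terms dominate |u - e|^2 + |H u|^2 + |e|^2 since
   alpha L^2 < eta2.  As mu' lies in the range of A, |mu'| is controlled by |A^T mu'|,
   which the updates express through u - e, H u, B (w + e) and e.  Hence the left-hand
   side is at most a constant multiple of D.  The spectral bounds x^T S x <= rho(S) |x|^2
   come from showing that the supremum of the Rayleigh quotients is an eigenvalue. *)

Section Dot.
Variables (R : realType) (p : nat).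
Implicit Types (a b c d : 'cV[R]_p).

Definition dotv a b : R := \sum_(i < p) a i 0 * b i 0.

Lemma sqnorm_dotv a : sqnorm a = dotv a a.
Proof. by apply: eq_bigr => i _; rewrite expr2. Qed.

Lemma dotvC a b : dotv a b = dotv b a.
Proof. by apply: eq_bigr => i _; rewrite mulrC. Qed.

Lemma dotvDl a b c : dotv (a + b) c = dotv a c + dotv b c.
Proof. by rewrite /dotv -big_split; apply: eq_bigr => i _; rewrite mxE mulrDl. Qed.

Lemma dotvDr a b c : dotv a (b + c) = dotv a b + dotv a c.
Proof. by rewrite dotvC dotvDl !(dotvC a). Qed.

Lemma dotvZl k a b : dotv (k *: a) b = k * dotv a b.
Proof. by rewrite /dotv mulr_sumr; apply: eq_bigr => i _; rewrite mxE mulrA. Qed.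

Lemma dotvZr k a b : dotv a (k *: b) = k * dotv a b.
Proof. by rewrite dotvC dotvZl dotvC. Qed.

Lemma dotvNr a b : dotv a (- b) = - dotv a b.
Proof. by rewrite -scaleN1r dotvZr mulN1r. Qed.

Lemma dotvBr a b c : dotv a (b - c) = dotv a b - dotv a c.
Proof. by rewrite dotvDr dotvNr. Qed.

Lemma sqnorm_ge0 a : 0 <= sqnorm a.
Proof. by apply: sumr_ge0 => i _; apply: sqr_ge0. Qed.

Lemma sqnormD a b : sqnorm (a + b) = sqnorm a + 2 * dotv a b + sqnorm b.
Proof. by rewrite !sqnorm_dotv dotvDl !dotvDr (dotvC b a); ring. Qed.

Lemma sqnormZ k a : sqnorm (k *: a) = k ^+ 2 * sqnorm a.
Proof. by rewrite !sqnorm_dotv dotvZl dotvZr mulrA -expr2. Qed.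

Lemma sqnormN a : sqnorm (- a) = sqnorm a.
Proof. by rewrite -scaleN1r sqnormZ sqrrN expr1n mul1r. Qed.

Lemma sqnormD_le a b : sqnorm (a + b) <= 2 * sqnorm a + 2 * sqnorm b.
Proof.
have := sqnorm_ge0 (a - b).
by rewrite !sqnormD sqnormN dotvNr; lra.
Qed.

Lemma sqnormD4_le a b c d :
  sqnorm (a + b + c + d) <= 4 * (sqnorm a + sqnorm b + sqnorm c + sqnorm d).
Proof.
rewrite -addrA; apply: le_trans (sqnormD_le _ _) _.
by have := sqnormD_le a b; have := sqnormD_le c d; lra.
Qed.

Lemma sqr_coord_le a i : a i 0 ^+ 2 <= sqnorm a.
Proof.
by rewrite /sqnorm (bigD1 i) //= lerDl; apply: sumr_ge0 => j _; apply: sqr_ge0.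
Qed.

End Dot.

Lemma dotv_mulmx (R : realType) p q (M : 'M[R]_(q, p)) (a : 'cV[R]_q) (b : 'cV[R]_p) :
  dotv a (M *m b) = dotv (M^T *m a) b.
Proof.
rewrite /dotv; under eq_bigr => i _ do rewrite mxE big_distrr /=.
rewrite exchange_big /=; apply: eq_bigr => j _.
rewrite mxE big_distrl /=; apply: eq_bigr => i _.
by rewrite !mxE mulrCA mulrA.
Qed.

Section QuadraticForm.
Variables (R : realType) (p : nat).
Implicit Types (S : 'M[R]_p) (x y : 'cV[R]_p).

Definition qf S x : R := dotv x (S *m x).

Definition abs_entry_sum S : R := \sum_(i < p) \sum_(j < p) `|S i j|.

Lemma abs_entry_sum_ge0 S : 0 <= abs_entry_sum S.
Proof. by apply: sumr_ge0 => i _; apply: sumr_ge0 => j _. Qed.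

Lemma qf_mxE S x : (x^T *m S *m x) 0 0 = qf S x.
Proof. by rewrite -mulmxA mxE; apply: eq_bigr => i _; rewrite mxE. Qed.

Lemma qfD S x y : S^T = S ->
  qf S (x + y) = qf S x + 2 * dotv y (S *m x) + qf S y.
Proof.
move=> S_sym; rewrite /qf mulmxDr !dotvDl !dotvDr [dotv x (S *m y)]dotv_mulmx S_sym.
by rewrite [dotv (S *m x) y]dotvC; ring.
Qed.

Lemma abs_mul_coord_le x i j : `|x i 0 * x j 0| <= sqnorm x.
Proof.
have := sqr_coord_le x i; have := sqr_coord_le x j.
rewrite normrM -(real_normK (num_real (x i 0))) -(real_normK (num_real (x j 0))).
have := sqr_ge0 (`|x i 0| - `|x j 0|); rewrite sqrrB mulr2n; lra.
Qed.

Lemma abs_qf_le S x : `|qf S x| <= abs_entry_sum S * sqnorm x.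
Proof.
rewrite /qf /dotv /abs_entry_sum mulr_suml.
apply: le_trans (ler_norm_sum _ _ _) _; apply: ler_sum => i _.
rewrite mxE big_distrr mulr_suml /=.
apply: le_trans (ler_norm_sum _ _ _) _; apply: ler_sum => j _.
by rewrite mulrCA normrM ler_wpM2l // mulrC abs_mul_coord_le.
Qed.

Lemma qf_le_abs_entry_sum S x : qf S x <= abs_entry_sum S * sqnorm x.
Proof. exact: le_trans (ler_norm _) (abs_qf_le S x). Qed.

Lemma sqnorm_gt0 x : x != 0 -> 0 < sqnorm x.
Proof.
move=> x_neq0; have [i xi_neq0] : exists i, x i 0 != 0.
  apply/existsP; apply: contraR x_neq0 => /existsPn x0.
  by apply/eqP/matrixP => i j; rewrite ord1 mxE; apply/eqP/negPn.
by apply: lt_le_trans (sqr_coord_le x i); rewrite exprn_even_gt0.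
Qed.

(* Expand 0 <= qf S (x - t S x) with t = 1/(K + 1). *)
Lemma sqnorm_mulmx_psd_le S x : S^T = S -> (forall y, 0 <= qf S y) ->
  sqnorm (S *m x) <= (abs_entry_sum S + 1) * qf S x.
Proof.
move=> S_sym S_psd; set K := abs_entry_sum S; set s := sqnorm (S *m x).
have K_ge0 : 0 <= K := abs_entry_sum_ge0 S.
set t := (K + 1)^-1.
have t_gt0 : 0 < t by rewrite invr_gt0; lra.
have tK : t * (K + 1) = 1 by rewrite mulVf // gt_eqF //; lra.
have qf_shift : qf S (x + (- t) *: (S *m x))
    = qf S x - 2 * t * s + t ^+ 2 * qf S (S *m x).
  by rewrite qfD // /qf -scalemxAr !dotvZl !dotvZr -sqnorm_dotv -/s; ring.
have := S_psd (x + (- t) *: (S *m x)); rewrite qf_shift.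
have hSx : t ^+ 2 * qf S (S *m x) <= t ^+ 2 * (K * s).
  by rewrite ler_wpM2l ?sqr_ge0 ?qf_le_abs_entry_sum.
have tKs : t ^+ 2 * (K * s) = t * s - t ^+ 2 * s.
  have -> : t ^+ 2 * (K * s) = (t * (K + 1) - t) * (t * s) by ring.
  by rewrite tK; ring.
have t2s_ge0 : 0 <= t ^+ 2 * s by rewrite mulr_ge0 ?sqr_ge0 ?sqnorm_ge0.
have -> : s = (K + 1) * (t * s) by rewrite mulrA [_ * t]mulrC tK mul1r.
rewrite ler_pM2l; lra.
Qed.

End QuadraticForm.

Lemma sqnorm_mulmx (R : realType) p q (N : 'M[R]_(q, p)) (x : 'cV[R]_p) :
  sqnorm (N *m x) = qf (N^T *m N) x.
Proof. by rewrite /qf sqnorm_dotv -mulmxA dotv_mulmx dotvC. Qed.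

Lemma sqnorm_mulmx_le (R : realType) p q (N : 'M[R]_(q, p)) (x : 'cV[R]_p) :
  sqnorm (N *m x) <= abs_entry_sum (N^T *m N) * sqnorm x.
Proof. by rewrite sqnorm_mulmx qf_le_abs_entry_sum. Qed.

Lemma psd_unitmx_coercive (R : realType) p (S : 'M[R]_p) :
  S^T = S -> (forall x, 0 <= qf S x) -> S \in unitmx ->
  exists2 c, 0 < c & forall x, c * sqnorm x <= qf S x.
Proof.
move=> S_sym S_psd S_unit; set K := abs_entry_sum ((invmx S)^T *m invmx S).
set KS := abs_entry_sum S + 1.
have K_ge0 : 0 <= K := abs_entry_sum_ge0 _.
have KS_gt0 : 0 < KS by rewrite ltr_wpDl ?abs_entry_sum_ge0.
exists (K * KS + 1)^-1; first by rewrite invr_gt0 ltr_wpDl ?mulr_ge0 // ltW.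
move=> x; rewrite ler_pdivrMl ?ltr_wpDl ?mulr_ge0 ?(ltW KS_gt0) //.
have hx : sqnorm x <= K * sqnorm (S *m x).
  by have := sqnorm_mulmx_le (invmx S) (S *m x); rewrite mulKmx.
have hSx : K * sqnorm (S *m x) <= K * (KS * qf S x).
  by rewrite ler_wpM2l // sqnorm_mulmx_psd_le.
have := S_psd x; nra.
Qed.

Section Rayleigh.
Variables (R : realType) (p : nat) (S : 'M[R]_p).
Hypothesis S_sym : S^T = S.

Definition below_rayleigh : set R := [set t | exists x, t * sqnorm x < qf S x].

Lemma below_rayleigh_ubound b : (forall x, qf S x <= b * sqnorm x) ->
  ubound below_rayleigh b.
Proof.
move=> hb t [x hx]; rewrite leNgt; apply/negP => bt.
have : b * sqnorm x <= t * sqnorm x by rewrite ler_wpM2r ?sqnorm_ge0 ?ltW.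
by have := hb x; lra.
Qed.

(* The supremum of the Rayleigh quotients is an eigenvalue: otherwise
   sup%:M - S would be positive semidefinite and invertible, hence coercive,
   and the supremum could be lowered. *)
Lemma qf_le_eigenvalue : (0 < p)%N ->
  exists2 r, eigenvalue S r & forall x, qf S x <= r * sqnorm x.
Proof.
move=> p_gt0; set M := sup below_rayleigh.
have ub := below_rayleigh_ubound (qf_le_abs_entry_sum S).
have ne : (below_rayleigh !=set0)%classic.
  exists (- abs_entry_sum S - 1), (const_mx 1 : 'cV[R]_p).
  have s1 : 0 < sqnorm (const_mx 1 : 'cV[R]_p).
    apply: sqnorm_gt0; apply/negP => /eqP/matrixP/(_ (Ordinal p_gt0) 0).
    by rewrite !mxE; apply/eqP; rewrite oner_eq0.
  have := abs_qf_le S (const_mx 1); rewrite ler_norml => /andP[+ _]; nra.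
have hsup : has_sup below_rayleigh by split => //; exists (abs_entry_sum S).
have qf_le_M x : qf S x <= M * sqnorm x.
  rewrite leNgt; apply/negP => hx; have s_ge0 := sqnorm_ge0 x.
  have [r r_gt0 hr] : exists2 r, 0 < r & r * (sqnorm x + 1) = qf S x - M * sqnorm x.
    exists ((qf S x - M * sqnorm x) / (sqnorm x + 1)).
      by rewrite divr_gt0 ?subr_gt0 ?ltr_wpDl.
    by rewrite divfK // gt_eqF // ltr_wpDl.
  have : M + r <= M.
    apply: sup_upper_bound => //; exists x.
    by move: hr; rewrite mulrDl mulrDr mulr1; lra.
  lra.
exists M => //; apply: contraT => notM.
have C_sym : (M%:M - S)^T = M%:M - S by rewrite linearB /= tr_scalar_mx S_sym.
have qfC x : qf (M%:M - S) x = M * sqnorm x - qf S x.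
  by rewrite /qf mulmxBl mul_scalar_mx dotvBr dotvZr sqnorm_dotv.
have C_psd x : 0 <= qf (M%:M - S) x by rewrite qfC subr_ge0.
have C_unit : M%:M - S \in unitmx.
  rewrite unitmxE unitfE; apply: contra notM => /det0P[v v_neq0 vC].
  apply/eigenvalueP; exists v => //; apply/eqP.
  by rewrite -subr_eq0 -mul_mx_scalar -mulmxBr -oppr_eq0 -mulmxN opprB vC.
have [c c_gt0 hc] := psd_unitmx_coercive C_sym C_psd C_unit.
have : M <= M - c.
  apply: ge_sup => //; apply: below_rayleigh_ubound => x.
  by have := hc x; rewrite qfC mulrBl; lra.
lra.
Qed.

End Rayleigh.

Lemma qf_le_rho (R : realType) p (S : 'M[R]_p) r : S^T = S -> is_rho S r ->
  forall x, qf S x <= r * sqnorm x.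
Proof.
move=> S_sym [_ r_max] x; case: p S S_sym r_max x => [|p] S S_sym r_max x.
  by rewrite /qf /dotv /sqnorm !big_ord0 mulr0.
have [M /r_max M_le_r qf_le_M] := qf_le_eigenvalue S_sym (ltn0Sn p).
by apply: le_trans (qf_le_M x) _; rewrite ler_wpM2r ?sqnorm_ge0.
Qed.

Lemma eigenvalue_psd_ge0 (R : realType) p (S : 'M[R]_p) r : S^T = S ->
  (forall x, 0 <= qf S x) -> eigenvalue S r -> 0 <= r.
Proof.
move=> S_sym S_psd /eigenvalueP[v vS v_neq0].
have Sv : S *m v^T = r *: v^T by rewrite -S_sym -trmx_mul vS linearZ.
have := S_psd v^T; rewrite /qf Sv dotvZr -sqnorm_dotv.
by rewrite pmulr_lge0 // sqnorm_gt0 // trmx_eq0.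
Qed.

(* [pinvmx] inverts [A^T *m A] on its range, which contains [A^T *m A *m v]. *)
Lemma sqnorm_mulmx_le_range (R : realType) p q (A : 'M[R]_(q, p)) :
  exists2 K, 0 <= K & forall v, sqnorm (A *m v) <= K * sqnorm (A^T *m (A *m v)).
Proof.
set G := A^T *m A; have G_sym : G^T = G by rewrite /G trmx_mul trmxK.
exists (abs_entry_sum (pinvmx G)^T); first exact: abs_entry_sum_ge0.
move=> v; rewrite sqnorm_mulmx mulmxA -/G.
have := mulmxKpV (submxMl v^T G); move: (pinvmx G) => Z GZG; clearbody G.
have {}GZG : G *m (Z^T *m (G *m v)) = G *m v.
  by have := congr1 trmx GZG; rewrite !trmx_mul trmxK G_sym !mulmxA.
by rewrite /qf -{1}GZG dotv_mulmx G_sym qf_le_abs_entry_sum.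
Qed.

Lemma secant_slope_bounded (R : realType) (phi : R -> R) (m L : R) :
  (forall x, derivable phi x 1) -> (forall x, m <= derive1 phi x <= L) ->
  forall a b, exists2 c, m <= c <= L & phi a - phi b = c * (a - b).
Proof.
move=> phi_der phi'_bnd.
have mvt a b : b < a -> exists2 c, m <= c <= L & phi a - phi b = c * (a - b).
  move=> ba; have [c _ ->] := MVT ba (fun x _ => derivableP (phi_der x))
    (derivable_within_continuous (fun x _ => phi_der x)).
  by exists (derive1 phi c); [apply: phi'_bnd | rewrite derive1E].
move=> a b; have [ab|ba|<-] := ltgtP a b; last 1 first.
- by exists (derive1 phi a); rewrite ?subrr ?mulr0.
- have [c hc e] := mvt b a ab; exists c => //.
  by rewrite -opprB e -mulrN opprB.
- exact: mvt.
Qed.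

Lemma sqr_add_mul_le (R : realType) (p e k q : R) : 1 <= q -> - q <= k <= q ->
  (p + k * e) ^+ 2 <= 2 * q ^+ 2 * (p ^+ 2 + e ^+ 2).
Proof.
move=> q_ge1 /andP[qk kq]; have : k ^+ 2 <= q ^+ 2 by nra.
have : 1 <= q ^+ 2 by rewrite expr_ge1 // (le_trans ler01).
have := sqr_ge0 (p - k * e); have := sqr_ge0 p; have := sqr_ge0 e; nra.
Qed.

Definition coord_const (R : realType) (alpha L eta : R) : R :=
  (1 + 2 * (1 + L ^+ 2) * (1 + alpha * L) ^+ 2)
  * (1 + (alpha * (eta - alpha * L ^+ 2))^-1).

Lemma coord_const_gt0 (R : realType) (alpha L eta : R) :
  0 < alpha -> alpha * L ^+ 2 < eta -> 0 < coord_const alpha L eta.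
Proof.
move=> alpha_gt0 alpha_L.
have : 0 <= 2 * (1 + L ^+ 2) * (1 + alpha * L) ^+ 2.
  by rewrite mulr_ge0 ?sqr_ge0 // mulr_ge0 // addr_ge0 ?sqr_ge0.
have : 0 <= (alpha * (eta - alpha * L ^+ 2))^-1.
  by rewrite invr_ge0 mulr_ge0 ?subr_ge0 ?ltW.
by move=> *; rewrite mulr_gt0 //; lra.
Qed.

(* With p = d + alpha h e, the right-hand side dominates p^2 + s e^2 for
   s = alpha (eta - alpha L^2) > 0, while d and e + d are p minus multiples of e. *)
Lemma coord_bound (R : realType) (m L alpha eta h e d : R) :
  0 < m -> m <= h <= L -> 0 < alpha -> alpha * L ^+ 2 < eta ->
  d ^+ 2 + (h * (e + d)) ^+ 2 + e ^+ 2 <=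
  coord_const alpha L eta
    * (d ^+ 2 + 2 * alpha * (h * (e + d)) * e - alpha * (2 * m - eta) * e ^+ 2).
Proof.
move=> m_gt0 /andP[mh hL] alpha_gt0 alphaL.
set s := alpha * (eta - alpha * L ^+ 2); set p := d + alpha * h * e.
set c := 1 + 2 * (1 + L ^+ 2) * (1 + alpha * L) ^+ 2.
have s_gt0 : 0 < s by rewrite mulr_gt0 // subr_gt0.
have h2L : h ^+ 2 <= L ^+ 2 by rewrite lerXn2r ?nnegrE; lra.
have lower : p ^+ 2 + s * e ^+ 2 <=
    d ^+ 2 + 2 * alpha * (h * (e + d)) * e - alpha * (2 * m - eta) * e ^+ 2.
  have -> : d ^+ 2 + 2 * alpha * (h * (e + d)) * e - alpha * (2 * m - eta) * e ^+ 2
      = p ^+ 2 + s * e ^+ 2 + alpha * (2 * (h - m) + alpha * (L ^+ 2 - h ^+ 2)) * e ^+ 2.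
    by rewrite /p /s; ring.
  have : 0 <= alpha * (L ^+ 2 - h ^+ 2) by rewrite mulr_ge0 ?subr_ge0 // ltW.
  by move=> ?; rewrite lerDl mulr_ge0 ?sqr_ge0 // mulr_ge0 ?(ltW alpha_gt0) //; lra.
have upper : d ^+ 2 + (h * (e + d)) ^+ 2 + e ^+ 2 <= c * (p ^+ 2 + e ^+ 2).
  set q := 1 + alpha * L.
  have aL_ge0 : 0 <= alpha * L by rewrite mulr_ge0 ?ltW //; lra.
  have q_ge1 : 1 <= q by rewrite /q; lra.
  have ah_ge0 : 0 <= alpha * h by rewrite mulr_ge0 ?ltW //; lra.
  have ah_le : alpha * h <= alpha * L := ler_wpM2l (ltW alpha_gt0) hL.
  have hd : d ^+ 2 <= 2 * q ^+ 2 * (p ^+ 2 + e ^+ 2).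
    have -> : d = p + (- (alpha * h)) * e by rewrite /p; ring.
    by apply: sqr_add_mul_le => //; apply/andP; split; rewrite /q; lra.
  have hed : (e + d) ^+ 2 <= 2 * q ^+ 2 * (p ^+ 2 + e ^+ 2).
    have -> : e + d = p + (1 - alpha * h) * e by rewrite /p; ring.
    by apply: sqr_add_mul_le => //; apply/andP; split; rewrite /q; lra.
  have hg : (h * (e + d)) ^+ 2 <= L ^+ 2 * (2 * q ^+ 2 * (p ^+ 2 + e ^+ 2)).
    by rewrite exprMn; apply: ler_pM => //; rewrite ?sqr_ge0.
  have -> : c * (p ^+ 2 + e ^+ 2) = p ^+ 2 + e ^+ 2
      + 2 * q ^+ 2 * (p ^+ 2 + e ^+ 2) + L ^+ 2 * (2 * q ^+ 2 * (p ^+ 2 + e ^+ 2)).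
    by rewrite /c /q; ring.
  have := sqr_ge0 p; lra.
have scale : p ^+ 2 + e ^+ 2 <= (1 + s^-1) * (p ^+ 2 + s * e ^+ 2).
  have : 0 <= s^-1 * p ^+ 2 by rewrite mulr_ge0 ?sqr_ge0 ?invr_ge0 ?ltW.
  have : s^-1 * (s * e ^+ 2) = e ^+ 2 by rewrite mulrA mulVf ?gt_eqF // mul1r.
  have : 0 <= s * e ^+ 2 by rewrite mulr_ge0 ?sqr_ge0 ?ltW.
  rewrite mulrDl mul1r mulrDr; lra.
have c_ge0 : 0 <= c.
  by rewrite /c addr_ge0 // mulr_ge0 ?sqr_ge0 // mulr_ge0 // addr_ge0 ?sqr_ge0.
apply: le_trans upper _; rewrite /coord_const -/s -/c -mulrA.
apply: (ler_wpM2l c_ge0); apply: le_trans scale _.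
by apply: ler_wpM2l lower; rewrite addr_ge0 ?invr_ge0 ?ltW.
Qed.

Section OneStep.
Variables (R : realType) (n eps : nat) (A : 'M[R]_(eps, n)) (B : 'M[R]_n).
Variables (rho P KA KB KN alpha beta m L eta : R).
Hypotheses (B_sym : B^T = B) (B_psd : forall x, 0 <= qf B x).
Hypotheses (B_rho : forall x, qf B x <= rho * sqnorm x) (rho_ge0 : 0 <= rho).
Hypothesis A_P : forall x, sqnorm (A *m x) <= P * sqnorm x.
Hypotheses (KA_ge0 : 0 <= KA)
  (A_range : forall v, sqnorm (A *m v) <= KA * sqnorm (A^T *m (A *m v))).
Hypotheses (KB_ge0 : 0 <= KB) (B_KB : forall x, sqnorm (B *m x) <= KB * qf B x).
Hypotheses (KN_ge0 : 0 <= KN)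
  (N_KN : forall x, sqnorm ((B + beta *: (A^T *m A)) *m x) <= KN * sqnorm x).
Hypotheses (alpha_gt0 : 0 < alpha) (beta_gt0 : 0 < beta) (m_gt0 : 0 < m).
Hypotheses (beta_P : beta * P < 2 * m - eta - 2 * rho) (alpha_L : alpha * L ^+ 2 < eta).

Definition energy_const : R := coord_const alpha L eta + KB / alpha.

Definition error_const : R :=
  1 + alpha * rho + 4 * KA * (1 + alpha ^+ 2 + alpha ^+ 2 * KN) / (alpha * beta).

Definition contraction_rate : R := (energy_const * error_const)^-1.

Lemma contraction_rate_gt0 : 0 < contraction_rate.
Proof.
have K3_gt0 := coord_const_gt0 alpha_gt0 alpha_L.
have : 0 <= KB / alpha by rewrite divr_ge0 // ltW.
have : 0 <= alpha * rho by rewrite mulr_ge0 // ltW.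
have : 0 <= 4 * KA * (1 + alpha ^+ 2 + alpha ^+ 2 * KN) / (alpha * beta).
  have : 0 <= alpha ^+ 2 * KN by rewrite mulr_ge0 ?sqr_ge0.
  move=> ?; rewrite divr_ge0 ?mulr_ge0 // ?ltW //.
  by have := sqr_ge0 alpha; lra.
rewrite /contraction_rate /energy_const /error_const => *.
by rewrite invr_gt0 mulr_gt0 //; lra.
Qed.

Variables (h : 'I_n -> R) (u w g e v : 'cV[R]_n) (mu mu' : 'cV[R]_eps).
Hypotheses (h_bnd : forall i, m <= h i <= L) (g_diag : forall i, g i 0 = h i * u i 0).
Hypothesis e_def : e = u - alpha *: g - alpha *: (A^T *m mu) - alpha *: (B *m w).
Hypotheses (mu'_def : mu' = mu + beta *: (A *m e)) (mu'_range : mu' = A *m v).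

Let d := u - e.
Let X := sqnorm d + 2 * alpha * dotv g e - alpha * (2 * m - eta) * sqnorm e.
Let LHS := (1 + alpha * rho) * sqnorm e + alpha / beta * sqnorm mu'.
Let RHS := sqnorm u + alpha / beta * sqnorm mu + alpha * rho * sqnorm w.
Let D := RHS - LHS.
Let Y := sqnorm d + sqnorm g + sqnorm e + sqnorm (B *m (w + e)).

Lemma dissipation_ge : X + alpha * qf B (w + e) <= D.
Proof.
have d_def : d = alpha *: (g + A^T *m mu + B *m w).
  by rewrite /d e_def; apply/matrixP => i j; rewrite !mxE; ring.
have hu : sqnorm u = sqnorm e
    + 2 * alpha * (dotv e g + dotv e (A^T *m mu) + dotv e (B *m w)) + sqnorm d.
  by rewrite -{1}(subrK e u) -/d addrC sqnormD {1}d_def dotvZr !dotvDr; ring.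
have hmu' : sqnorm mu' = sqnorm mu + 2 * beta * dotv e (A^T *m mu)
    + beta ^+ 2 * sqnorm (A *m e).
  by rewrite mu'_def sqnormD sqnormZ dotvZr dotv_mulmx dotvC; ring.
have hqf : qf B (w + e) = qf B w + 2 * dotv e (B *m w) + qf B e by rewrite qfD.
have D_eq : D = sqnorm d + 2 * alpha * dotv e g + 2 * alpha * dotv e (B *m w)
    + alpha * (rho * sqnorm w - rho * sqnorm e - beta * sqnorm (A *m e)).
  by rewrite /D /RHS /LHS hu hmu'; field; rewrite gt_eqF.
have slack : 0 <= (2 * m - eta - 2 * rho - beta * P) * sqnorm e.
  by rewrite mulr_ge0 ?sqnorm_ge0 // subr_ge0 ltW.
have Ae : beta * sqnorm (A *m e) <= beta * (P * sqnorm e).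
  by apply: (ler_wpM2l (ltW beta_gt0)).
have := ler_wpM2l (ltW alpha_gt0) (B_rho w).
have := ler_wpM2l (ltW alpha_gt0) (B_rho e).
have := ler_wpM2l (ltW alpha_gt0) Ae.
have := mulr_ge0 (ltW alpha_gt0) slack.
rewrite D_eq /X hqf (dotvC g e); lra.
Qed.

Lemma coord_sum_le : sqnorm d + sqnorm g + sqnorm e <= coord_const alpha L eta * X.
Proof.
set K := coord_const alpha L eta; set c := alpha * (2 * m - eta).
have hi i : d i 0 ^+ 2 + g i 0 ^+ 2 + e i 0 ^+ 2
    <= K * (d i 0 ^+ 2 + 2 * alpha * g i 0 * e i 0 - c * e i 0 ^+ 2).
  have -> : g i 0 = h i * (e i 0 + d i 0) by rewrite g_diag /d !mxE; ring.
  exact: coord_bound m_gt0 (h_bnd i) alpha_gt0 alpha_L.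
have -> : X = \sum_i (d i 0 ^+ 2 + 2 * alpha * g i 0 * e i 0 - c * e i 0 ^+ 2).
  rewrite sumrB big_split /= /X /sqnorm /dotv mulr_sumr [c * _]mulr_sumr.
  by congr (_ + _ - _); apply: eq_bigr => i _; rewrite mulrA.
by rewrite /sqnorm -!big_split mulr_sumr; apply: ler_sum => i _; apply: hi.
Qed.

Lemma energy_le : Y <= energy_const * D.
Proof.
set K3 := coord_const alpha L eta; set q := qf B (w + e).
have K3_gt0 : 0 < K3 := coord_const_gt0 alpha_gt0 alpha_L.
have hX := coord_sum_le; have hD := dissipation_ge; rewrite -/K3 -/q in hX hD.
have X_ge0 : 0 <= X.
  rewrite -(pmulr_rge0 _ K3_gt0); apply: le_trans hX.
  by rewrite !addr_ge0 ?sqnorm_ge0.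
have q_ge0 : 0 <= q := B_psd _.
have KBa_ge0 : 0 <= KB / alpha by rewrite divr_ge0 // ltW.
have := ler_wpM2l (ltW K3_gt0) hD; have := ler_wpM2l KBa_ge0 hD.
have : KB / alpha * (alpha * q) = KB * q by rewrite mulrA divfK // gt_eqF.
have := mulr_ge0 (ltW K3_gt0) (mulr_ge0 (ltW alpha_gt0) q_ge0).
have : 0 <= KB / alpha * X by rewrite mulr_ge0.
have := B_KB (w + e); rewrite -/q.
rewrite /Y /energy_const -/K3; lra.
Qed.

Lemma error_le : LHS <= error_const * Y.
Proof.
set N := B + beta *: (A^T *m A); set z := w + e.
have Y_ge : forall t, 0 <= t -> t * sqnorm e <= t * Y.
  move=> t t_ge0; apply: (ler_wpM2l t_ge0).
  rewrite /Y; have := sqnorm_ge0 d; have := sqnorm_ge0 g.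
  by have := sqnorm_ge0 (B *m z); lra.
have A_mu' : alpha *: (A^T *m mu')
    = d + (- alpha) *: g + (- alpha) *: (B *m z) + alpha *: (N *m e).
  rewrite mu'_def mulmxDr -scalemxAr /z mulmxDr /N mulmxDl -scalemxAl -mulmxA.
  move: (A^T *m mu) (A^T *m (A *m e)) (B *m w) (B *m e) e_def => a1 a2 a3 a4 e_def'.
  by rewrite /d e_def'; apply/matrixP => i j; rewrite !mxE; ring.
have hmu' : alpha ^+ 2 * sqnorm (A^T *m mu') <=
    4 * (sqnorm d + alpha ^+ 2 * sqnorm g + alpha ^+ 2 * sqnorm (B *m z)
         + alpha ^+ 2 * (KN * sqnorm e)).
  rewrite -sqnormZ A_mu'; apply: le_trans (sqnormD4_le _ _ _ _) _.
  rewrite !sqnormZ sqrrN; have := ler_wpM2l (sqr_ge0 alpha) (N_KN e); lra.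
set C := KA / (alpha * beta).
have C_ge0 : 0 <= C by rewrite divr_ge0 // mulr_ge0 // ltW.
have mu'_le : alpha / beta * sqnorm mu' <= C * (alpha ^+ 2 * sqnorm (A^T *m mu')).
  have -> : C * (alpha ^+ 2 * sqnorm (A^T *m mu'))
      = alpha / beta * (KA * sqnorm (A^T *m mu')) by rewrite /C; field; rewrite !gt_eqF.
  by apply: ler_wpM2l; [rewrite divr_ge0 // ltW | rewrite mu'_range A_range].
have energy4 : 4 * (sqnorm d + alpha ^+ 2 * sqnorm g + alpha ^+ 2 * sqnorm (B *m z)
         + alpha ^+ 2 * (KN * sqnorm e)) <= 4 * (1 + alpha ^+ 2 + alpha ^+ 2 * KN) * Y.
  have := Y_ge _ (mulr_ge0 (sqr_ge0 alpha) KN_ge0).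
  have : alpha ^+ 2 * (sqnorm g + sqnorm (B *m z)) <= alpha ^+ 2 * Y.
    apply: ler_wpM2l; rewrite ?sqr_ge0 // /Y.
    by have := sqnorm_ge0 d; have := sqnorm_ge0 e; lra.
  have : sqnorm d <= Y.
    rewrite /Y; have := sqnorm_ge0 g; have := sqnorm_ge0 e.
    by have := sqnorm_ge0 (B *m z); lra.
  lra.
have := ler_wpM2l C_ge0 hmu'; have := ler_wpM2l C_ge0 energy4.
have := Y_ge _ (addr_ge0 ler01 (mulr_ge0 (ltW alpha_gt0) rho_ge0)).
rewrite /LHS /error_const -/C.
have -> : 4 * KA * (1 + alpha ^+ 2 + alpha ^+ 2 * KN) / (alpha * beta)
    = C * (4 * (1 + alpha ^+ 2 + alpha ^+ 2 * KN)) by rewrite /C; field; rewrite !gt_eqF.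
lra.
Qed.

Lemma one_step_contraction : LHS <= (1 + contraction_rate)^-1 * RHS.
Proof.
have K4_gt0 : 0 < energy_const.
  by rewrite ltr_wpDr ?coord_const_gt0 // divr_ge0 // ltW.
have K45_gt0 : 0 < energy_const * error_const by rewrite -invr_gt0 contraction_rate_gt0.
have K5_gt0 : 0 < error_const by rewrite -(pmulr_rgt0 _ K4_gt0).
have := le_trans error_le (ler_wpM2l (ltW K5_gt0) energy_le).
rewrite mulrA [error_const * _]mulrC -ler_pdivrMl // -/contraction_rate.
have := contraction_rate_gt0; rewrite /D => *.
by rewrite ler_pdivlMl ?mulrDl ?mul1r; lra.
Qed.

End OneStep.

Lemma grad_sub_diag (R : realType) n (f : 'I_n -> R -> R) (m L : R) :
  (forall i x, derivable (derive1 (f i)) x 1) ->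
  (forall i x, m <= derive1 (derive1 (f i)) x <= L) ->
  forall x y : 'cV[R]_n, exists2 h : 'I_n -> R, (forall i, m <= h i <= L)
    & forall i, (grad f x - grad f y) i 0 = h i * (x - y) i 0.
Proof.
move=> f'_der f''_bnd x y.
have slope i : exists2 c, m <= c <= L & (grad f x - grad f y) i 0 = c * (x - y) i 0.
  have [c c_bnd eq_c] := secant_slope_bounded (f'_der i) (f''_bnd i) (x i 0) (y i 0).
  by exists c => //; rewrite !mxE eq_c.
exists (fun i => if (x - y) i 0 == 0 then derive1 (derive1 (f i)) (x i 0)
                 else (grad f x - grad f y) i 0 / (x - y) i 0) => i /=;
  case: eqP => [xy0|/eqP xy_neq0].
- exact: f''_bnd.
- by have [c c_bnd ->] := slope i; rewrite mulfK.
- by have [c _ ->] := slope i; rewrite xy0 !mulr0.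
- by rewrite divfK.
Qed.

Section FlexPDIterates.
Variables (R : realType) (n eps : nat) (f : 'I_n -> R -> R) (A : 'M[R]_(eps, n)).
Variables (B : 'M[R]_n) (alpha beta : R) (T : nat) (x0 : 'cV[R]_n).

Lemma flexpd_lamS k : flexpd_lam f A B alpha beta T x0 k.+1
  = flexpd_lam f A B alpha beta T x0 k + beta *: (A *m flexpd_inner f A B alpha beta T x0 k T).
Proof.
by rewrite /flexpd_inner /flexpd_x /flexpd_lam /=; case: (flexpd_state f A B alpha beta T x0 k).
Qed.

Lemma flexpd_lam_range k : exists v, flexpd_lam f A B alpha beta T x0 k = A *m v.
Proof.
elim: k => [|k [v IH]]; first by exists 0; rewrite mulmx0.
exists (v + beta *: flexpd_inner f A B alpha beta T x0 k T).
by rewrite flexpd_lamS IH mulmxDr scalemxAr.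
Qed.

Lemma flexpd_inner_last k : (0 < T)%N ->
  flexpd_inner f A B alpha beta T x0 k T
  = inner_step f A B alpha (flexpd_lam f A B alpha beta T x0 k) (flexpd_x f A B alpha beta T x0 k)
      (flexpd_inner f A B alpha beta T x0 k T.-1).
Proof. by rewrite /flexpd_inner; case: T. Qed.

End FlexPDIterates.

Lemma inner_step_sub_opt (R : realType) n eps (f : 'I_n -> R -> R) (A : 'M[R]_(eps, n))
  (B : 'M[R]_n) (alpha : R) (lam lamstar : 'cV[R]_eps) (xk y xstar : 'cV[R]_n) :
  grad f xstar + A^T *m lamstar = 0 -> B *m xstar = 0 ->
  inner_step f A B alpha lam xk y - xstar = (y - xstar) - alpha *: (grad f y - grad f xstar)
    - alpha *: (A^T *m (lam - lamstar)) - alpha *: (B *m (xk - xstar)).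
Proof.
move=> /eqP; rewrite addr_eq0 => /eqP grad_opt B_opt.
rewrite /inner_step !mulmxBr B_opt grad_opt subr0.
by apply/matrixP => i j; rewrite !mxE; ring.
Qed.

Lemma step_sizes_admissible (R : realType) (m L rhoB rhoAA alpha beta eta2 eta3 : R) :
  0 < m -> m <= L -> rhoB < eta3 -> eta2 + eta3 < 2 * m - rhoB ->
  alpha < eta2 / L ^+ 2 -> 0 < beta -> beta < (2 * m - (eta2 + eta3) - rhoB) / rhoAA ->
  beta * rhoAA < 2 * m - eta2 - 2 * rhoB /\ alpha * L ^+ 2 < eta2.
Proof.
move=> m_gt0 m_le_L rhoB_lt_eta3 eta_sum alpha_lt beta_gt0 beta_lt.
have rhoAA_gt0 : 0 < rhoAA.
  by have := lt_trans beta_gt0 beta_lt; rewrite pmulr_rgt0 ?invr_gt0 //; lra.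
split; first by move: beta_lt; rewrite ltr_pdivlMr //; lra.
by move: alpha_lt; rewrite ltr_pdivlMr // exprn_gt0 //; lra.
Qed.

Theorem theorem3p12 (R : realType) (n eps : nat)
  (E : 'I_eps -> 'I_n * 'I_n) (f : 'I_n -> R -> R) (m L : R)
  (B : 'M[R]_n) (rhoB rhoAA : R)
  (xstar : 'cV[R]_n) (lamstar : 'cV[R]_eps)
  (alpha beta eta2 eta3 : R) (T : nat) (x0 : 'cV[R]_n) :
  simple_edges E -> graph_connected E ->
  0 < m -> m <= L ->
  (forall i x, derivable (f i) x 1 /\ derivable (derive1 (f i)) x 1) ->
  (forall i x, m <= derive1 (derive1 (f i)) x <= L) ->
  B^T = B ->
  (forall v : 'cV[R]_n, 0 <= (v^T *m B *m v) 0 0) ->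
  (forall v : 'cV[R]_n, B *m v = 0 <-> incidence R E *m v = 0) ->
  (forall i j, i != j -> B i j != 0 -> adj E i j) ->
  is_rho B rhoB -> rhoB < m ->
  is_rho ((incidence R E)^T *m incidence R E) rhoAA ->
  (* x* is the unique minimizer of f subject to A x = 0 *)
  incidence R E *m xstar = 0 ->
  (forall x, incidence R E *m x = 0 -> fsum f xstar <= fsum f x) ->
  (forall y, incidence R E *m y = 0 ->
     (forall x, incidence R E *m x = 0 -> fsum f y <= fsum f x) -> y = xstar) ->
  (* lambda* is a Lagrange multiplier in the column space of A *)
  grad f xstar + (incidence R E)^T *m lamstar = 0 ->
  B *m xstar = 0 ->
  (exists v : 'cV[R]_n, lamstar = incidence R E *m v) ->
  (1 <= T)%N ->
  0 < eta2 -> rhoB < eta3 -> eta2 + eta3 < 2 * m - rhoB ->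
  0 < alpha -> alpha < eta2 / L ^+ 2 ->
  0 < beta -> beta < (2 * m - (eta2 + eta3) - rhoB) / rhoAA ->
  exists deltaG : R, 0 < deltaG /\
    forall k : nat,
      let A := incidence R E in
      let xk := flexpd_x f A B alpha beta T x0 k in
      let lk := flexpd_lam f A B alpha beta T x0 k in
      let lk1 := flexpd_lam f A B alpha beta T x0 k.+1 in
      let xT := flexpd_inner f A B alpha beta T x0 k T in
      let xTm1 := flexpd_inner f A B alpha beta T x0 k T.-1 in
      (1 + alpha * rhoB) * sqnorm (xT - xstar)
        + alpha / beta * sqnorm (lk1 - lamstar)
      <= (1 + deltaG)^-1 *
         (sqnorm (xTm1 - xstar) + alpha / beta * sqnorm (lk - lamstar)
          + alpha * rhoB * sqnorm (xk - xstar)).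
Proof.
move=> _ _ m_gt0 m_le_L f_der f''_bnd B_sym B_mx_psd _ _ rhoB_def _ rhoAA_def A_xstar _ _
  kkt B_xstar [vs lamstar_range] T_ge1 _ rhoB_lt_eta3 eta_sum alpha_gt0 alpha_lt beta_gt0 beta_lt.
set A := incidence R E; set N := B + beta *: (A^T *m A).
have B_psd x : 0 <= qf B x by rewrite -qf_mxE.
have rhoB_ge0 := eigenvalue_psd_ge0 B_sym B_psd rhoB_def.1.
have AA_sym : (A^T *m A)^T = A^T *m A by rewrite trmx_mul trmxK.
have A_P x : sqnorm (A *m x) <= rhoAA * sqnorm x by rewrite sqnorm_mulmx qf_le_rho.
have [beta_P alpha_L] := step_sizes_admissible m_gt0 m_le_L rhoB_lt_eta3 eta_sum
  alpha_lt beta_gt0 beta_lt.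
have [KA KA_ge0 A_range] := sqnorm_mulmx_le_range A.
exists (contraction_rate rhoB KA (abs_entry_sum B + 1) (abs_entry_sum (N^T *m N))
  alpha beta L eta2).
split; first by apply: contraction_rate_gt0; rewrite ?addr_ge0 ?abs_entry_sum_ge0.
move=> k /=; set xT1 := flexpd_inner f A B alpha beta T x0 k T.-1.
have [h h_bnd g_diag] := grad_sub_diag (fun i x => (f_der i x).2) f''_bnd xT1 xstar.
have [v lam_range] := flexpd_lam_range f A B alpha beta T x0 k.+1.
apply: (one_step_contraction B_sym B_psd (qf_le_rho B_sym rhoB_def) rhoB_ge0 A_P
  KA_ge0 A_range _ (fun x => sqnorm_mulmx_psd_le x B_sym B_psd) _
  (fun x => sqnorm_mulmx_le N x) alpha_gt0 beta_gt0 m_gt0 beta_P alpha_L h_bnd g_diag).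
- by rewrite addr_ge0 ?abs_entry_sum_ge0.
- exact: abs_entry_sum_ge0.
- by rewrite flexpd_inner_last // (inner_step_sub_opt _ _ _ _ kkt B_xstar).
- by rewrite flexpd_lamS mulmxBr A_xstar subr0 addrAC.
- by rewrite lam_range lamstar_range -mulmxBr.
Qed.
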